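(* Let $p=a/b$ with $a,b$ positive coprime integers, $0<p<1/2$, and $b\not\equiv 0\pmod 4$; set $k'=b$ if $b$ is even and $k'=2b$ if $b$ is odd (so $k'p=a$ for $b$ even and $k'p=2a$ for $b$ odd). Let $(\Delta_L^{(m)})_{m\ge 1}$ satisfy $\Delta_L^{(m+1)}=\Delta_L^{(m)}+1+2p-2\lceil\Delta_L^{(m)}\rceil$ for all $m\ge1$, with initial value $-1<\Delta_L^{(1)}<1$. Then $$|\Delta_L^{(m)}|<k'p+2\quad\text{for all } m\ge 1 .$$
   Context: $\lceil\cdot\rceil$ denotes the ceiling function. *)

From Stdlib Require Import Reals ZArith Lra.
Open Scope R_scope.

(* Ceiling function: Rceil x is the least integer z with x <= z.
   Stdlib's [up x] is the unique integer z with x < z <= x + 1,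
   so ceil x = 1 - up (-x). *)
Definition Rceil (x : R) : Z := (1 - up (- x))%Z.

Lemma Rceil_spec (x : R) : IZR (Rceil x) - 1 < x <= IZR (Rceil x).
Proof.
  unfold Rceil. destruct (archimed (- x)) as [H1 H2].
  rewrite minus_IZR. split; lra.
Qed.

(* Write [D n = c n - g n] with [c n] the ceiling of [D n] and [g n] in [0, 1).
   The recurrence turns [g] into the rotation [g n = frac (g 0 - n q)], [q = 2p],
   and gives [c (n+1) + c n = 1 + j n], where [j n] counts the integers crossed by
   [g 0 - x] for [x] between [n q] and [(n+1) q]. Hence [e n = (-1)^n (2 c n - 1)]
   moves by [2 j n] with alternating sign. If [P] is odd and [P q = K] is an
   integer, [j] is [P]-periodic with [K] crossings per period: [e] is therefore
   [2P]-periodic, and over one such period it never drifts by more than the number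
   of crossings in a window of length at most [P], i.e. [K]. Since [k' = 2P] with
   [P] odd exactly when [4] does not divide [b], this gives [|D| <= k' p + 1]. *)
From Stdlib Require Import Reals ZArith Lra Lia.
Open Scope R_scope.

Lemma Int_part_le x y : x <= y -> (Int_part x <= Int_part y)%Z.
Proof.
  intros Hxy; destruct (base_Int_part x), (base_Int_part y).
  assert (Hlt : IZR (Int_part x) < IZR (Int_part y + 1)) by (rewrite plus_IZR; lra).
  apply lt_IZR in Hlt; lia.
Qed.

Lemma Int_part_sub_IZR x k : Int_part (x - IZR k) = (Int_part x - k)%Z.
Proof.
  symmetry; apply Int_part_spec; destruct (base_Int_part x).
  rewrite minus_IZR; lra.
Qed.

Section AlternatingWalk.

Variables (F e : nat -> R) (P : nat) (K : R).
Hypothesis F_step_le : forall n, F (S n) <= F n.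
Hypothesis F_period : forall n, F (n + P) = F n - K.
Hypothesis P_odd : Nat.Odd P.
Hypothesis e_step : forall n, e (S n) = e n + 2 * (-1) ^ S n * (F n - F (S n)).

Lemma F_antitone m n : (m <= n)%nat -> F n <= F m.
Proof.
  induction 1 as [|n _ IH]; [lra|].
  specialize (F_step_le n); lra.
Qed.

Lemma F_window u k : (k <= P)%nat -> F u - F (u + k) <= K.
Proof.
  intros Hk; pose proof (F_antitone (u + k) (u + P) ltac:(lia)) as Hmono.
  rewrite F_period in Hmono; lra.
Qed.

Lemma e_drift u k : Rabs (e (u + k) - e u) <= 2 * (F u - F (u + k)).
Proof.
  induction k as [|k IH].
  - rewrite Nat.add_0_r, Rminus_diag, Rabs_R0; lra.
  - rewrite Nat.add_succ_r, e_step.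
    assert (Hstep : Rabs (2 * (-1) ^ S (u + k) * (F (u + k) - F (S (u + k))))
                    = 2 * (F (u + k) - F (S (u + k)))).
    { specialize (F_step_le (u + k)).
      rewrite !Rabs_mult, pow_1_abs, (Rabs_pos_eq 2), (Rabs_pos_eq (_ - _)); lra. }
    pose proof (Rabs_triang (e (u + k) - e u)
                  (2 * (-1) ^ S (u + k) * (F (u + k) - F (S (u + k))))).
    replace (e (u + k) + 2 * (-1) ^ S (u + k) * (F (u + k) - F (S (u + k))) - e u)
      with (e (u + k) - e u + 2 * (-1) ^ S (u + k) * (F (u + k) - F (S (u + k))))
      by ring.
    lra.
Qed.

Lemma e_shift_sum n : e (n + P) + e n = e P + e 0.
Proof.
  assert (sign_flip : forall m, (-1) ^ (m + P) = - (-1) ^ m).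
  { intros m; destruct P_odd as [s ->].
    rewrite pow_add, Nat.add_1_r, pow_1_odd; ring. }
  induction n as [|n IH]; [reflexivity|].
  replace (S n + P)%nat with (S (n + P)) by lia.
  rewrite !e_step.
  replace (S (n + P)) with (S n + P)%nat by lia.
  rewrite sign_flip, !F_period; lra.
Qed.

Lemma e_period2 n : e (n + P + P) = e n.
Proof. pose proof (e_shift_sum n); pose proof (e_shift_sum (n + P)); lra. Qed.

Lemma e_periodic k n : e (n + k * (P + P)) = e n.
Proof.
  induction k as [|k IH]; [f_equal; lia|].
  replace (n + S k * (P + P))%nat with (n + k * (P + P) + P + P)%nat by lia.
  rewrite e_period2; exact IH.
Qed.

Lemma e_drift_le_2P n : (n <= P + P)%nat -> Rabs (e n - e 0) <= 2 * K.
Proof.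
  intros Hn; destruct (Nat.le_gt_cases n P) as [HnP | HPn].
  - pose proof (e_drift 0 n); pose proof (F_window 0 n HnP); simpl in *; lra.
  - pose proof (e_shift_sum (n - P)) as Hsum.
    replace (n - P + P)%nat with n in Hsum by lia.
    pose proof (e_drift (n - P) (P + P - n)) as Hd.
    pose proof (F_window (n - P) (P + P - n) ltac:(lia)) as Hw.
    replace (n - P + (P + P - n))%nat with P in Hd, Hw by lia.
    replace (e n - e 0) with (e P - e (n - P)) by lra.
    lra.
Qed.

Theorem alternating_walk_bounded n : Rabs (e n - e 0) <= 2 * K.
Proof.
  assert (HP : (P + P <> 0)%nat) by (destruct P_odd; lia).
  rewrite (Nat.div_mod_eq n (P + P)), Nat.add_comm, Nat.mul_comm, e_periodic.
  apply e_drift_le_2P.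
  pose proof (Nat.mod_upper_bound n (P + P) HP); lia.
Qed.

End AlternatingWalk.

Section CeilingOrbit.

Variables (q : R) (D : nat -> R).
Hypothesis D_step : forall n, D (S n) = D n + 1 + q - 2 * IZR (Rceil (D n)).

Let gap n := IZR (Rceil (D n)) - D n.
Let crossings n := Int_part (gap 0 - INR n * q).

Lemma gap_bounds n : 0 <= gap n < 1.
Proof. destruct (Rceil_spec (D n)); unfold gap; lra. Qed.

Lemma gap_step n :
  gap (S n) = gap n - q + IZR (Rceil (D (S n)) + Rceil (D n) - 1).
Proof. unfold gap; rewrite D_step, !minus_IZR, plus_IZR; ring. Qed.

Lemma gap_rotation n : gap 0 - INR n * q = IZR (crossings n) + gap n.
Proof.
  induction n as [|n IH].
  - unfold crossings; replace (gap 0 - INR 0 * q) with (gap 0) by (simpl; ring).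
    destruct (Int_part_frac_part_spec (gap 0) 0 (gap 0) (gap_bounds 0))
      as [<- _]; [ring | simpl; ring].
  - set (j := (Rceil (D (S n)) + Rceil (D n) - 1)%Z).
    assert (Hdecomp : gap 0 - INR (S n) * q = IZR (crossings n - j) + gap (S n)).
    { rewrite S_INR, minus_IZR, gap_step; fold j; lra. }
    destruct (Int_part_frac_part_spec _ _ _ (gap_bounds (S n)) Hdecomp) as [Hz _].
    unfold crossings at 1; rewrite <- Hz; exact Hdecomp.
Qed.

Lemma ceil_pair_sum n :
  (Rceil (D (S n)) + Rceil (D n) - 1 = crossings n - crossings (S n))%Z.
Proof.
  apply eq_IZR; rewrite (minus_IZR (crossings n)).
  pose proof (gap_rotation n); pose proof (gap_rotation (S n)); pose proof (gap_step n).
  rewrite S_INR, Rmult_plus_distr_r in *; lra.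
Qed.

Theorem ceil_orbit_bounded (P : nat) (K : Z) :
  0 < q -> Nat.Odd P -> INR P * q = IZR K -> -1 < D 0 < 1 ->
  forall n, Rabs (D n) <= IZR K + 1.
Proof.
  intros Hq HP HPK HD0 n.
  set (e := fun n => (-1) ^ n * (2 * IZR (Rceil (D n)) - 1)).
  assert (Hwalk : Rabs (e n - e 0%nat) <= 2 * IZR K).
  { apply (alternating_walk_bounded (fun n => IZR (crossings n)) e P).
    - intros m; apply IZR_le, Int_part_le; rewrite S_INR; nra.
    - intros m; unfold crossings.
      replace (gap 0 - INR (m + P) * q) with (gap 0 - INR m * q - IZR K)
        by (rewrite plus_INR, <- HPK; ring).
      rewrite Int_part_sub_IZR, minus_IZR; reflexivity.
    - exact HP.
    - intros m; unfold e; rewrite <- minus_IZR, <- ceil_pair_sum.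
      rewrite !minus_IZR, plus_IZR; simpl; ring. }
  assert (He0 : Rabs (e 0%nat) <= 1).
  { assert (Hc0 : Rceil (D 0) = 0%Z \/ Rceil (D 0) = 1%Z).
    { destruct (Rceil_spec (D 0)).
      assert (-1 < Rceil (D 0))%Z by (apply lt_IZR; lra).
      assert (Rceil (D 0) < 2)%Z by (apply lt_IZR; lra).
      lia. }
    unfold e; destruct Hc0 as [-> | ->]; simpl;
      unfold Rabs; destruct Rcase_abs; lra. }
  assert (Hen : Rabs (2 * IZR (Rceil (D n)) - 1) <= 2 * IZR K + 1).
  { replace (Rabs (2 * IZR (Rceil (D n)) - 1)) with (Rabs (e n))
      by (unfold e; rewrite Rabs_mult, pow_1_abs; ring).
    pose proof (Rabs_triang (e n - e 0%nat) (e 0%nat)) as Htri.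
    replace (e n - e 0%nat + e 0%nat) with (e n) in Htri by ring; lra. }
  destruct (Rceil_spec (D n)).
  revert Hen; unfold Rabs; do 2 destruct Rcase_abs; lra.
Qed.

End CeilingOrbit.

Lemma half_k'_odd (b : Z) : (0 < b)%Z -> (b mod 4 <> 0)%Z ->
  exists P : nat, Nat.Odd P /\
    (if Z.even b then b else 2 * b)%Z = (2 * Z.of_nat P)%Z.
Proof.
  intros Hb Hb4; destruct (Z.even b) eqn:Hev.
  - apply Z.even_spec in Hev as [w ->].
    destruct (Z.Even_or_Odd w) as [[v ->] | [v ->]].
    { exfalso; apply Hb4; replace (2 * (2 * v))%Z with (v * 4)%Z by ring.
      apply Z_mod_mult. }
    exists (2 * Z.to_nat v + 1)%nat; split; [eexists; reflexivity | lia].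
  - assert (Hodd : Z.odd b = true) by (rewrite <- Z.negb_even, Hev; reflexivity).
    apply Z.odd_spec in Hodd as [v ->].
    exists (2 * Z.to_nat v + 1)%nat; split; [eexists; reflexivity | lia].
Qed.

Lemma k'_mul_ratio (a b : Z) : IZR b <> 0 ->
  IZR (if Z.even b then b else 2 * b) * (IZR a / IZR b)
  = IZR (if Z.even b then a else 2 * a).
Proof. intros Hb; destruct (Z.even b); rewrite ?mult_IZR; field; exact Hb. Qed.

Theorem lemma4 (a b : Z) (Delta : nat -> R) :
  (0 < a)%Z -> (0 < b)%Z -> Z.gcd a b = 1%Z ->
  0 < IZR a / IZR b < 1 / 2 ->
  (b mod 4 <> 0)%Z ->
  (forall m : nat, (1 <= m)%nat ->
     Delta (S m) = Delta m + 1 + 2 * (IZR a / IZR b) - 2 * IZR (Rceil (Delta m))) ->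
  -1 < Delta 1%nat < 1 ->
  let k' : Z := if Z.even b then b else (2 * b)%Z in
  forall m : nat, (1 <= m)%nat ->
    Rabs (Delta m) < IZR k' * (IZR a / IZR b) + 2.
Proof.
  intros _ Hb _ Hp Hb4 Hrec HD1 k' [|n] Hm; [lia|].
  assert (Hbr : IZR b <> 0) by (apply not_0_IZR; lia).
  destruct (half_k'_odd b Hb Hb4) as [P [HP Hk']].
  unfold k'; rewrite (k'_mul_ratio a b Hbr).
  apply Rle_lt_trans with (IZR (if Z.even b then a else 2 * a) + 1); [|lra].
  apply (ceil_orbit_bounded (2 * (IZR a / IZR b)) (fun n => Delta (S n))) with (P := P).
  - intros m; apply Hrec; lia.
  - lra.
  - exact HP.
  - rewrite <- (k'_mul_ratio a b Hbr), Hk', mult_IZR, <- INR_IZR_INZ; ring.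
  - exact HD1.
Qed.
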